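(* Let $p$ be an odd prime, let $n$ be the multiplicative order of $2$ modulo $p$, and let $e$ be the multiplicative order of $p$ modulo $3n$. Suppose that $e>1$. Set $q=p^a$ where $a\not\equiv 0\pmod e$, and suppose further that $q\equiv 1\pmod 6$. Then for any primitive element $\rho$ of $\mathbb F_q$, the cyclotomic number $c^3_q(1,2)$ is odd.
   Context: Write $q=6r+1$; for $i\in\mathbb Z_3$, $C^3_q(i)=\{\rho^{3j+i}: 0\le j\le 2r-1\}$, and $c^3_q(a,b)=|(C^3_q(a)+1)\cap C^3_q(b)|$ for $a,b\in\mathbb Z_3$. *)

From HB Require Import structures.
From mathcomp Require Import all_boot all_order all_algebra all_field.
Set Implicit Arguments. Unset Strict Implicit. Unset Printing Implicit Defensive.
Import GRing.Theory.
Local Open Scope ring_scope.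

Definition is_mult_order (x m n : nat) : Prop :=
  [/\ (0 < n)%N, x ^ n = 1 %[mod m]
    & forall k, (0 < k)%N -> x ^ k = 1 %[mod m] -> (n <= k)%N].

(* Cyclotomic class C^3_q(i) = { rho^(3j+i) : 0 <= j <= 2r-1 }, q = #|F| = 6r+1,
   so 2r = (q-1)/3. *)
Definition cycl_class (F : finFieldType) (rho : F) (i : nat) : {set F} :=
  [set rho ^+ (3 * j + i)%N | j : 'I_((#|F| - 1) %/ 3)].

Definition cycl_num (F : finFieldType) (rho : F) (a b : nat) : nat :=
  #|[set y : F | (y - 1 \in cycl_class rho a) && (y \in cycl_class rho b)]|.

From HB Require Import structures.
From mathcomp Require Import all_boot all_order all_algebra all_field.
From mathcomp Require Import ring zify.
Import GRing.Theory.

Set Implicit Arguments.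
Unset Strict Implicit.
Unset Printing Implicit Defensive.

(* Write q = 3f + 1.  Since q = 1 (mod 6), f is even, so -1 is a cube; this
   gives the relations c(a,b) = c(b,a) and c(1,1) = c(0,2).  Sorting the
   elements of C(0)+1 and C(1)+1 by class then yields c(1,2) = c(0,0) + 1,
   and y |-> y/(y-1) is an involution of (C(0)+1) ∩ C(0) whose only possible
   fixed point is 2.  Finally 2 is a cube iff 2^f = 1 in F iff n | f iff
   p^a = 1 (mod 3n) iff e | a, which is excluded: so c(0,0) is even. *)

Lemma mult_order_dvdn x m n k : is_mult_order x m n -> x ^ k = 1 %[mod m] -> n %| k.
Proof.
case=> n_gt0 xn_1 n_min xk_1.
have xkn_1 : x ^ (k %% n) = 1 %[mod m].
  have xnq_1 : (x ^ n) ^ (k %/ n) = 1 %[mod m] by rewrite -modnXm xn_1 modnXm exp1n.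
  by rewrite -xk_1 {2}(divn_eq k n) expnD (mulnC _ n) expnM -modnMml xnq_1 modnMml mul1n.
case: (posnP (k %% n)) => [kn0|kn_gt0]; first exact/eqP.
by have := n_min _ kn_gt0 xkn_1; rewrite leqNgt ltn_pmod.
Qed.

Lemma leq_card_inj (T : finType) (A B : {set T}) (g : T -> T) :
  injective g -> {in A, forall x, g x \in B} -> #|A| <= #|B|.
Proof.
move=> g_inj gAB; rewrite -(card_imset A g_inj); apply: subset_leq_card.
by apply/subsetP=> _ /imsetP[x Ax ->]; apply: gAB.
Qed.

Lemma even_card_involution (T : finType) (S : {set T}) (g : T -> T) :
  {in S, forall x, [/\ g x \in S, g (g x) = x & g x != x]} -> ~~ odd #|S|.
Proof.
move: {2}#|S| (leqnn #|S|) => n; elim: n S => [|n IHn] S le_S_n gS.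
  by move: le_S_n; rewrite leqn0 => /eqP ->.
have [->|[x Sx]] := set_0Vmem S; first by rewrite cards0.
have [Sgx ggx gx_neq] := gS x Sx.
have card_S : #|S| = (#|S :\ x :\ g x| + 2)%N.
  by rewrite (cardsD1 x) Sx (cardsD1 (g x)) !inE gx_neq Sgx; lia.
rewrite card_S addn2 negbK; apply: IHn; first by move: le_S_n; rewrite card_S; lia.
move=> y; rewrite !inE => /and3P[y_neq_gx y_neq_x Sy].
have [Sgy ggy gy_neq] := gS y Sy.
split=> //; rewrite Sgy andbT; apply/andP; split.
  by apply: contraNneq y_neq_x => gy_gx; rewrite -ggy gy_gx ggx.
by apply: contraNneq y_neq_gx => gy_x; rewrite -ggy gy_x.
Qed.

Lemma modn6_1_div3 q :
  q = 1 %[mod 6] -> 3 %| q.-1 /\ ~~ odd ((q - 1) %/ 3).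
Proof.
move=> q_mod6; have [t ->] : exists t, q = 6 * t + 1 by exists (q %/ 6); lia.
have -> : (6 * t + 1 - 1) %/ 3 = 2 * t by lia.
by split; [lia | rewrite oddM].
Qed.

Local Open Scope ring_scope.

Lemma natr_eq1_pchar (R : nzRingType) p k :
  p \in [pchar R] -> (k%:R == 1 :> R) = (k == 1 %[mod p])%N.
Proof.
move=> pR; have p_gt1 := prime_gt1 (pcharf_prime pR).
case: k => [|k]; first by rewrite eq_sym oner_eq0 mod0n modn_small.
by rewrite eqn_mod_dvd // subn1 (dvdn_pcharf pR) mulrSr -subr_eq0 addrK.
Qed.

Section CyclotomicClasses.

Variables (F : finFieldType) (rho : F).
Hypothesis rho_prim : (#|F|.-1).-primitive_root rho.
Hypothesis three_dvd : (3 %| #|F|.-1)%N.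

Local Notation f := ((#|F| - 1) %/ 3)%N.
Local Notation C := (cycl_class rho).

Lemma card_pred_F : #|F|.-1 = (3 * f)%N.
Proof. by rewrite subn1 mulnC divnK. Qed.

Lemma cycl_class_size_gt0 : (0 < f)%N.
Proof.
rewrite -(ltn_pmul2l (isT : (0 < 3)%N)) muln0 -card_pred_F -subn1 subn_gt0.
exact: finNzRing_gt1.
Qed.

Lemma rho_neq0 : rho != 0.
Proof.
apply/eqP=> rho0; have := prim_expr_order rho_prim.
rewrite rho0 expr0n card_pred_F muln_eq0 (negbTE (lt0n_neq0 cycl_class_size_gt0)).
by move/eqP; rewrite eq_sym oner_eq0.
Qed.

Lemma cycl_classE i x : (x \in C i) = (x != 0) && ((x / rho ^+ i) ^+ f == 1).
Proof.
have rhoX_neq0 k : rho ^+ k != 0 by rewrite expf_neq0 ?rho_neq0.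
apply/imsetP/andP => [[j _ ->]|[x_neq0 /eqP x_f]].
  rewrite rhoX_neq0 exprD mulfK // -exprM -(prim_order_dvd rho_prim).
  by rewrite card_pred_F mulnAC dvdn_mulr.
have [k x_k] : {k : 'I_(#|F|.-1) | x / rho ^+ i = rho ^+ k}.
  by apply: (prim_rootP rho_prim); rewrite card_pred_F mulnC exprM x_f expr1n.
have /dvdnP[j k_eq] : (3 %| k)%N.
  rewrite -(dvdn_pmul2r cycl_class_size_gt0) -card_pred_F.
  by rewrite (prim_order_dvd rho_prim) exprM -x_k x_f.
have j_lt : (j < f)%N by have := ltn_ord k; rewrite k_eq card_pred_F mulnC ltn_pmul2l.
by exists (Ordinal j_lt); rewrite //= exprD mulnC -k_eq -x_k divfK.
Qed.

Lemma cycl_class_neq0 i x : x \in C i -> x != 0.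
Proof. by rewrite cycl_classE => /andP[]. Qed.

Lemma cycl_classM i j x y : x \in C i -> y \in C j -> x * y \in C (i + j).
Proof.
rewrite !cycl_classE => /andP[x_neq0 /eqP x_f] /andP[y_neq0 /eqP y_f].
by rewrite mulf_neq0 // exprD invfM mulrACA exprMn x_f y_f mulr1 eqxx.
Qed.

Lemma cycl_classD3 i : C (i + 3) = C i.
Proof.
apply/setP=> x; rewrite !cycl_classE exprD invfM mulrA exprMn exprVn -exprM.
by rewrite -card_pred_F (prim_expr_order rho_prim) invr1 mulr1.
Qed.

Lemma cycl_classV i x : x \in C i -> x^-1 \in C (2 * i).
Proof.
rewrite !cycl_classE invr_eq0 => /andP[x_neq0 /eqP x_f]; rewrite x_neq0 /=.
have rhoi_neq0 : rho ^+ i != 0 by rewrite expf_neq0 ?rho_neq0.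
have -> : x^-1 / rho ^+ (2 * i) = (x / rho ^+ i)^-1 / (rho ^+ i) ^+ 3.
  by rewrite mulnC exprM; field; rewrite x_neq0 rhoi_neq0.
rewrite exprMn !exprVn x_f invr1 mul1r -!exprM -mulnA -card_pred_F mulnC exprM.
by rewrite (prim_expr_order rho_prim) expr1n invr1.
Qed.

Lemma cycl_class_uniq i j x :
  (i < 3)%N -> (j < 3)%N -> x \in C i -> x \in C j -> i = j.
Proof.
wlog le_ij : i j / (i <= j)%N.
  move=> W i_lt3 j_lt3 xi xj; case: (leqP i j) => [ij|/ltnW ji]; first exact: W.
  exact: esym (W _ _ ji j_lt3 i_lt3 xj xi).
rewrite !cycl_classE => _ j_lt3 /andP[_ /eqP x_fi] /andP[_ /eqP x_fj].
have : (rho ^+ (j - i)) ^+ f == 1.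
  rewrite -(subnKC le_ij) exprD invfM mulrA exprMn x_fi mul1r exprVn in x_fj.
  by move/eqP: x_fj; rewrite invr_eq1.
rewrite -exprM -(prim_order_dvd rho_prim) card_pred_F.
by rewrite dvdn_pmul2r ?cycl_class_size_gt0 // => /dvdnP[m]; lia.
Qed.

Lemma cycl_class_cover x : x != 0 -> [|| x \in C 0, x \in C 1 | x \in C 2].
Proof.
move=> x_neq0; have x_q1 : x ^+ #|F|.-1 = 1.
  by apply: (mulIf x_neq0); rewrite mul1r -exprSr prednK ?expf_card // ltnW ?finNzRing_gt1.
have [k ->] := prim_rootP rho_prim x_q1.
have k_lt : (k %/ 3 < f)%N by have := ltn_ord k; have := card_pred_F; lia.
have : rho ^+ k \in C (k %% 3).
  by apply/imsetP; exists (Ordinal k_lt); rewrite //= mulnC -divn_eq.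
have : (k %% 3 < 3)%N by rewrite ltn_mod.
by case: (k %% 3)%N => [|[|[|]]] // _ ->; rewrite ?orbT.
Qed.

Lemma cycl_class_index x :
  x != 0 -> exists2 k, (k < 3)%N & forall i, (i < 3)%N -> (x \in C i) = (i == k).
Proof.
move=> /cycl_class_cover /or3P[] xk; [exists 0%N | exists 1%N | exists 2%N] => // i i_lt3;
  by apply/idP/eqP => [xi|->] //; apply: cycl_class_uniq xi xk.
Qed.

Lemma card_cycl_class i : #|C i| = f.
Proof.
rewrite card_imset ?card_ord // => j k /eqP.
rewrite (eq_prim_root_expr rho_prim) eqn_modDr card_pred_F.
rewrite !modn_small ?ltn_pmul2l // eqn_pmul2l // => /eqP; exact: val_inj.
Qed.

Lemma card_setD0_cycl_classes (B : {set F}) :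
  #|B :\ 0| = (#|B :&: C 0| + #|B :&: C 1| + #|B :&: C 2|)%N.
Proof.
rewrite -(cardsID (C 0) (B :\ 0)) -(cardsID (C 1) (B :\ 0 :\: C 0)) addnA.
congr (_ + _ + _)%N; apply: eq_card => y; rewrite !inE.
all: have [->|/cycl_class_index[k k_lt3 yk]] := eqVneq y 0;
  first by rewrite !cycl_classE eqxx /= andbF.
all: by rewrite !yk //; case: k k_lt3 {yk} => [|[|[|]]] //=; rewrite ?andbF ?andbT.
Qed.

Lemma cycl_num_row a :
  ((-1 \in C a)%R + (cycl_num rho a 0 + cycl_num rho a 1 + cycl_num rho a 2))%N = f.
Proof.
pose A := (fun y : F => y - 1) @^-1: C a.
have cycl_numE b : cycl_num rho a b = #|A :&: C b| by apply: eq_card => y; rewrite !inE.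
have -> : (-1 \in C a) = (0 \in A) by rewrite inE sub0r.
rewrite !cycl_numE -card_setD0_cycl_classes -cardsD1 -(card_cycl_class a).
by apply: card_preimset => y z /addIr.
Qed.

Section EvenClassSize.

Hypothesis f_even : ~~ odd f.

Lemma N1_cycl_class0 : -1 \in C 0.
Proof. by rewrite cycl_classE oppr_eq0 oner_eq0 expr0 divr1 -signr_odd (negbTE f_even) /= eqxx. Qed.

Lemma cycl_classN i x : x \in C i -> - x \in C i.
Proof. by rewrite -mulN1r -[i]add0n; apply: cycl_classM N1_cycl_class0. Qed.

Lemma cycl_numC a b : cycl_num rho a b = cycl_num rho b a.
Proof.
suff le_ab a' b' : (cycl_num rho a' b' <= cycl_num rho b' a')%N.
  by apply/eqP; rewrite eqn_leq !le_ab.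
apply: (@leq_card_inj _ _ _ (fun y => 1 - y)) => [y z /addrI /oppr_inj //|y].
rewrite !inE => /andP[y1_Ca y_Cb]; rewrite addrAC subrr sub0r -opprB.
by apply/andP; split; apply: cycl_classN.
Qed.

Lemma cycl_num11 : cycl_num rho 1 1 = cycl_num rho 0 2.
Proof.
apply/eqP; rewrite eqn_leq; apply/andP; split.
  apply: (@leq_card_inj _ _ _ (fun y => (1 - y)^-1)).
    by move=> y z /invr_inj /addrI /oppr_inj.
  move=> y; rewrite !inE => /andP[y1_C1 y_C1].
  have u_C1 : 1 - y \in C 1 by rewrite -opprB cycl_classN.
  have uV_C2 : (1 - y)^-1 \in C 2 := cycl_classV u_C1.
  have -> : (1 - y)^-1 - 1 = y / (1 - y) by field; rewrite (cycl_class_neq0 u_C1).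
  rewrite uV_C2 andbT -(cycl_classD3 0); exact: cycl_classM y_C1 uV_C2.
apply: (@leq_card_inj _ _ _ (fun y => 1 - y^-1)).
  by move=> y z /addrI /oppr_inj /invr_inj.
move=> y; rewrite !inE => /andP[y1_C0 y_C2].
have y_neq0 := cycl_class_neq0 y_C2.
have yV_C1 : y^-1 \in C 1 by rewrite -(cycl_classD3 1); exact: cycl_classV y_C2.
rewrite addrAC subrr sub0r cycl_classN //=.
have -> : 1 - y^-1 = (y - 1) / y by field.
exact: cycl_classM y1_C0 yV_C1.
Qed.

Lemma cycl_num12 : cycl_num rho 1 2 = (cycl_num rho 0 0).+1.
Proof.
have N1_C1 : (-1 \in C 1) = false.
  by apply/negP => /(cycl_class_uniq (i := 0) (j := 1) isT isT N1_cycl_class0).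
have := cycl_num_row 0; have := cycl_num_row 1.
rewrite N1_cycl_class0 N1_C1 (cycl_numC 1 0) cycl_num11; lia.
Qed.

Lemma cycl_num00_even : 2 \notin C 0 -> ~~ odd (cycl_num rho 0 0).
Proof.
move=> two_C0; apply: (@even_card_involution _ _ (fun y => y / (y - 1))) => y.
rewrite !inE => /andP[y1_C0 y_C0].
have y_neq0 := cycl_class_neq0 y_C0; have y1_neq0 := cycl_class_neq0 y1_C0.
have y1V_C0 : (y - 1)^-1 \in C 0 := cycl_classV y1_C0.
have shift : y / (y - 1) - 1 = (y - 1)^-1 by field.
split.
- by rewrite shift y1V_C0 -[0%N]/(0 + 0)%N cycl_classM.
- by rewrite shift invrK divfK.
- apply: contraNneq two_C0 => fixed_y.
  have : (y - 1)^-1 = 1 by apply: (mulfI y_neq0); rewrite mulr1.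
  move/(congr1 GRing.inv); rewrite invrK invr1 => /eqP; rewrite subr_eq => /eqP y_2.
  by rewrite -[2]/(1 + 1 : F) -y_2.
Qed.

Lemma odd_cycl_num12 : 2 \notin C 0 -> odd (cycl_num rho 1 2).
Proof. by move=> two_C0; rewrite cycl_num12 /= cycl_num00_even. Qed.

End EvenClassSize.

End CyclotomicClasses.

Local Close Scope ring_scope.

Theorem corollary3p8 (p n e a : nat) :
  prime p -> odd p ->
  is_mult_order 2 p n ->
  is_mult_order p (3 * n) e ->
  1 < e ->
  ~~ (e %| a) ->
  p ^ a = 1 %[mod 6] ->
  forall (F : finFieldType), #|F| = p ^ a ->
  forall rho : F, ((#|F|.-1).-primitive_root rho)%R ->
  odd (cycl_num rho 1 2).
Proof.
(* [1 < e] already follows from [~~ (e %| a)], and [p] is odd since [p ^ a = 1 (mod 6)]. *)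
move=> p_prime _ ord2 ordp _ e_ndvd_a pa_mod6 F card_F rho rho_prim.
have q_mod6 : #|F| = 1 %[mod 6] by rewrite card_F.
have [three_dvd f_even] := modn6_1_div3 q_mod6.
apply: odd_cycl_num12 => //; apply/negP => two_cube.
have two_f_mod_p : 2 ^ ((#|F| - 1) %/ 3) = 1 %[mod p].
  apply/eqP; rewrite -(natr_eq1_pchar _ (card_finPcharP card_F p_prime)) natrX.
  by move: two_cube; rewrite (cycl_classE rho_prim three_dvd) expr0 divr1 => /andP[_].
have pa_mod : p ^ a = 1 %[mod 3 * n].
  apply/eqP; rewrite eqn_mod_dvd ?expn_gt0 ?prime_gt0 // subn1 -card_F.
  by rewrite (card_pred_F three_dvd) dvdn_pmul2l // (mult_order_dvdn ord2 two_f_mod_p).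
by move: e_ndvd_a; rewrite (mult_order_dvdn ordp pa_mod).
Qed.
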